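(* Let $E$ be an elliptic curve over $\mathbb{R}$, $P_1,\ldots,P_n\in E(\mathbb{R})$ linearly independent, with attached $q$ and $u_1,\ldots,u_n$ (normalized so that $q<|u_i|<1$ if $q>0$ and $q^2<u_i<1$ if $q<0$), and suppose $u_1,\ldots,u_k<0$, $u_{k+1},\ldots,u_n>0$ for some $0\le k\le n$. Then $\theta(u_i,q)>0$ for every $i$.
   Context: $\theta(x,q)=(1-x)\prod_{m\ge1}\frac{(1-q^mx)(1-q^mx^{-1})}{(1-q^m)^2}$ for real $x\notin q^{\mathbb{Z}}$, $0<|q|<1$. Tate parametrization: for $E/\mathbb{R}$ there is a unique real $q$, $0<|q|<1$, and an $\mathbb{R}$-analytic group isomorphism $\psi:\mathbb{R}^*/q^{\mathbb{Z}}\to E(\mathbb{R})$ (restriction of an isomorphism $\mathbb{C}^*/q^{\mathbb{Z}}\to E(\mathbb{C})$ commuting with conjugation, from Tate's uniformization of $E_q\cong_{\mathbb{R}}E$); $u_i\in\mathbb{R}^*$ is the normalized representative of $\psi^{-1}(P_i)$. *)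

From HB Require Import structures.
From mathcomp Require Import all_boot all_order all_algebra.
From mathcomp Require Import all_classical all_reals all_analysis.
Set Implicit Arguments. Unset Strict Implicit. Unset Printing Implicit Defensive.
Import Order.TTheory GRing.Theory Num.Theory.
Import numFieldNormedType.Exports.
Local Open Scope ring_scope.

Definition theta_partial (R : realType) (x q : R) (N : nat) : R :=
  \prod_(1 <= m < N.+1) ((1 - q ^+ m * x) * (1 - q ^+ m / x) / (1 - q ^+ m) ^+ 2).

(* theta(x,q) = (1-x) * prod_{m>=1} ..., the infinite product being the limit
   of the partial products (it converges for 0<|q|<1, x not in q^Z). *)
Definition theta (R : realType) (x q : R) : R :=
  (1 - x) * limn (theta_partial x q).

(* Abstract Tate isomorphism psi : R^x / q^Z -> E(R), presented as a map on nonzero reals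
   which is a group morphism from the multiplicative group of nonzero reals to (E,+), surjective, with kernel q^Z. *)
Definition tate_iso (R : realType) (E : zmodType) (q : R) (psi : R -> E) : Prop :=
  [/\ (forall x y : R, x != 0 -> y != 0 -> psi (x * y) = psi x + psi y),
      (forall x : R, x != 0 -> (psi x = 0 <-> exists k : int, x = q ^ k))
    & (forall Pt : E, exists2 x : R, x != 0 & psi x = Pt)].

Definition normalized (R : realType) (q u : R) : Prop :=
  if 0 < q then q < `|u| < 1 else q ^+ 2 < u < 1.

Definition lin_indep (E : zmodType) (n : nat) (P : 'I_n -> E) : Prop :=
  forall c : 'I_n -> int, \sum_(i < n) P i *~ c i = 0 -> forall i, c i = 0.

(* For a normalized u we have u < 1 and |u| < 1, so 1 - u > 0. Each factor of the
   infinite product is bounded below by a positive constant and differs from 1 by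
   O(|q|^m); hence the logarithms of the factors form an absolutely convergent
   series, and the product, the exponential of its sum, is positive. *)

From HB Require Import structures.
From mathcomp Require Import all_boot all_order all_algebra.
From mathcomp Require Import all_classical all_reals all_analysis.
From mathcomp Require Import ring lra.
Import Order.TTheory GRing.Theory Num.Theory.
Import numFieldNormedType.Exports.
Local Open Scope classical_set_scope.
Local Open Scope ring_scope.

Lemma norm_ln_le {R : realType} {a c : R} : 0 < c -> c <= 1 -> c <= a ->
  `|ln a| <= `|a - 1| / c.
Proof.
move=> c_gt0 c_le1 c_le_a.
have a_gt0 : 0 < a by apply: lt_le_trans c_le_a.
have norm_le_div : `|a - 1| <= `|a - 1| / c.
  by rewrite ler_pdivlMr //; have := normr_ge0 (a - 1); nra.
have ln_le_sub1 (b : R) : 0 < b -> ln b <= b - 1.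
  by move=> b_gt0; have := @le_ln1Dx R (b - 1); rewrite addrCA subrr addr0; apply; lra.
have [ln_ge0 | ln_lt0] := leP 0 (ln a).
  rewrite ger0_norm //; apply: le_trans norm_le_div; apply: le_trans (ler_norm _).
  exact: ln_le_sub1.
have ai_gt0 : 0 < a^-1 by rewrite invr_gt0.
rewrite ltr0_norm // -lnV ?posrE //; apply: le_trans (ln_le_sub1 _ ai_gt0) _.
have -> : a^-1 - 1 = (1 - a) / a by field; rewrite gt_eqF.
apply: le_trans (ler_norm _) _.
rewrite normrM distrC normrV ?unitfE ?gt_eqF // gtr0_norm //.
by rewrite ler_wpM2l ?normr_ge0 // lef_pV2 ?posrE.
Qed.

Lemma cvg_prod_gt0 (R : realType) (a : nat -> R) (c K r : R) :
  0 < c -> (forall m, c <= a m) -> 0 <= r < 1 ->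
  (forall m, `|a m - 1| <= K * r ^+ m) ->
  exists2 L : R, 0 < L & (fun N => \prod_(0 <= m < N) a m) @ \oo --> L.
Proof.
move=> c_gt0 a_ge_c /andP[r_ge0 r_lt1] a_near1.
pose c' := Num.min c 1.
have c'_gt0 : 0 < c' by rewrite lt_min c_gt0 ltr01.
have a_ge_c' m : c' <= a m by apply: le_trans (a_ge_c m); rewrite ge_min lexx.
have a_gt0 m : 0 < a m by apply: lt_le_trans (a_ge_c' m).
have K_ge0 : 0 <= K.
  by have := a_near1 0%N; rewrite expr0 mulr1; exact: le_trans (normr_ge0 _).
have ln_geometric m : `|ln (a m)| <= geometric (K / c') r m.
  have c'_le1 : c' <= 1 by rewrite ge_min lexx orbT.
  apply: le_trans (norm_ln_le c'_gt0 c'_le1 (a_ge_c' m)) _.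
  by rewrite /geometric /= mulrAC ler_pM2r ?invr_gt0.
have abs_cvg : cvgn [normed series (fun m => ln (a m))].
  apply: (@series_le_cvg R (fun m => `|ln (a m)|) _ _ _ ln_geometric) => [//|m|].
    by rewrite /geometric /= mulr_ge0 ?exprn_ge0 ?divr_ge0 // ltW.
  by apply: is_cvg_geometric_series; rewrite ger0_norm.
exists (expR (limn (series (fun m => ln (a m))))); first exact: expR_gt0.
have -> : (fun N => \prod_(0 <= m < N) a m) = expR \o series (fun m => ln (a m)).
  apply: funext => N; rewrite /= /series /= expR_sum.
  by apply: eq_bigr => m _; rewrite lnK // posrE.
by apply: continuous_cvg; [exact: continuous_expR | exact: normed_cvg].
Qed.

Section ThetaProduct.
Variables (R : realType) (x q : R).
Hypotheses (normq_gt0 : 0 < `|q|) (normq_lt1 : `|q| < 1) (x_normalized : normalized q x).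

Let x_neq0 : x != 0.
Proof.
move: x_normalized; rewrite /normalized; case: ifP => [q_pos /andP[qx _]|_ /andP[qx _]].
  by rewrite -normr_gt0 (lt_trans q_pos).
by rewrite gt_eqF // (le_lt_trans (sqr_ge0 q)).
Qed.

Let x_lt1 : x < 1.
Proof.
by move: x_normalized; rewrite /normalized; case: ifP => _ /andP[_ xlt1] //;
  apply: le_lt_trans (ler_norm _) xlt1.
Qed.

Let norm_x_lt1 : `|x| < 1.
Proof.
move: x_normalized; rewrite /normalized; case: ifP => _ /andP[qx xlt1] //.
by rewrite ger0_norm // ltW // (le_lt_trans (sqr_ge0 q)).
Qed.

Let norm_qX_le m : `|q ^+ m.+1| <= `|q|.
Proof.
by rewrite normrX exprS ler_piMr // exprn_ile1 // ltW.
Qed.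

Let one_sub_qX_div_ge : exists2 c : R, 0 < c & forall m, c <= 1 - q ^+ m.+1 / x.
Proof.
move: x_normalized; rewrite /normalized; case: ifP => [q_pos /andP[qx _]|q_npos /andP[qx _]].
  have ratio_lt1 : q / `|x| < 1 by rewrite ltr_pdivrMr ?mul1r // (lt_trans q_pos).
  exists (1 - q / `|x|) => [|m]; first by lra.
  suff : `|q ^+ m.+1 / x| <= q / `|x| by have := ler_norm (q ^+ m.+1 / x); lra.
  rewrite normrM normrV ?unitfE // ler_pM2r ?invr_gt0 ?normr_gt0 //.
  by rewrite -{2}(gtr0_norm q_pos).
have q_lt0 : q < 0 by move: normq_gt0 q_npos; rewrite normr_gt0; case: ltgtP.
have x_gt0 : 0 < x by apply: le_lt_trans qx; exact: sqr_ge0.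
have ratio_lt1 : q ^+ 2 / x < 1 by rewrite ltr_pdivrMr // mul1r.
have ratio_gt0 : 0 < q ^+ 2 / x by apply: divr_gt0 => //; rewrite expr2; nra.
exists (1 - q ^+ 2 / x) => [|[|m]]; first by lra.
  have : q / x < 0 by rewrite ltr_pdivrMr // mul0r.
  by rewrite expr1; lra.
suff : `|q ^+ m.+2 / x| <= q ^+ 2 / x by have := ler_norm (q ^+ m.+2 / x); lra.
rewrite normrM normrX normrV ?unitfE ?gt_eqF // (gtr0_norm x_gt0).
rewrite ler_pM2r ?invr_gt0 // -(real_normK (num_real q)).
by apply: ler_wiXn2l => //; exact: ltW.
Qed.

Let cvg_prod_one_sub_qX_mul (y : R) : `|y| <= 1 ->
  exists2 L : R, 0 < L &
    (fun N => \prod_(0 <= m < N) (1 - q ^+ m.+1 * y)) @ \oo --> L.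
Proof.
move=> y_le1; have qXy_le m : `|q ^+ m.+1 * y| <= `|q|.
  by rewrite normrM (le_trans _ (norm_qX_le m)) // ler_piMr.
apply: (@cvg_prod_gt0 R _ (1 - `|q|) 1 `|q|).
- by rewrite subr_gt0.
- by move=> m; have := ler_norm (q ^+ m.+1 * y); have := qXy_le m; lra.
- by rewrite normr_ge0 normq_lt1.
- move=> m; rewrite addrAC subrr add0r normrN mul1r normrM normrX exprS -mulrA.
  by rewrite mulrCA ler_piMr ?exprn_ge0 // mulr_ile1 // ltW.
Qed.

Let cvg_prod_one_sub_qX_div :
  exists2 L : R, 0 < L &
    (fun N => \prod_(0 <= m < N) (1 - q ^+ m.+1 / x)) @ \oo --> L.
Proof.
have [c c_gt0 c_le] := one_sub_qX_div_ge.
apply: (@cvg_prod_gt0 R _ c `|x|^-1 `|q|) => // [|m].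
  by rewrite normr_ge0 normq_lt1.
rewrite addrAC subrr add0r normrN normrM normrX normrV ?unitfE // mulrC.
by rewrite ler_pM2l ?invr_gt0 ?normr_gt0 // exprS ler_piMl ?exprn_ge0 // ltW.
Qed.

Lemma theta_partialE N : theta_partial x q N =
  (\prod_(0 <= m < N) (1 - q ^+ m.+1 * x)) * (\prod_(0 <= m < N) (1 - q ^+ m.+1 / x))
  / (\prod_(0 <= m < N) (1 - q ^+ m.+1 * 1)) ^+ 2.
Proof.
rewrite /theta_partial big_add1 /= expr2 -!big_split /= -prodfV -big_split /=.
by apply: eq_bigr => m _; rewrite mulr1 expr2.
Qed.

Lemma theta_gt0 : 0 < theta x q.
Proof.
have [L1 L1_gt0 cvg1] := cvg_prod_one_sub_qX_mul x (ltW norm_x_lt1).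
have [L2 L2_gt0 cvg2] := cvg_prod_one_sub_qX_div.
have norm1_le1 : `|1 : R| <= 1 by rewrite normr1.
have [L3 L3_gt0 cvg3] := cvg_prod_one_sub_qX_mul 1 norm1_le1.
have cvg_partial : theta_partial x q @ \oo --> L1 * L2 / L3 ^+ 2.
  rewrite (funext theta_partialE); apply: cvgM; first exact: cvgM.
  apply: cvgV; first by rewrite expf_neq0 ?gt_eqF.
  by rewrite expr2; under eq_fun do rewrite expr2; exact: cvgM.
rewrite /theta (cvg_lim _ cvg_partial) //.
by rewrite mulr_gt0 ?subr_gt0 // !mulr_gt0 // invr_gt0 exprn_gt0.
Qed.

End ThetaProduct.

Theorem corollary3p2 (R : realType) (E : zmodType) (q : R) (psi : R -> E)
    (n : nat) (P : 'I_n -> E) (u : 'I_n -> R) :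
  0 < `|q| < 1 ->
  tate_iso q psi ->
  lin_indep P ->
  (forall i, [/\ u i != 0, psi (u i) = P i & normalized q (u i)]) ->
  (exists2 k : nat, (k <= n)%N &
     forall i : 'I_n, ((i < k)%N -> u i < 0) /\ ((k <= i)%N -> 0 < u i)) ->
  forall i : 'I_n, 0 < theta (u i) q.
Proof.
move=> /andP[q_gt0 q_lt1] _ _ u_spec _ i.
have [_ _ u_normalized] := u_spec i.
exact: theta_gt0.
Qed.
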